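(* Let $\mathfrak{g}$ be a finite-dimensional complex simple Lie algebra and $j\in I$. For every chamber weight $\gamma\in\Gamma$: - $\gamma\in\Gamma^j$ if and only if $\langle h_j,\gamma\rangle\le0$; - $\gamma\in\Gamma_j$ if and only if $\langle h_j,\gamma\rangle>0$.
   Context: $\mathfrak{g}$ has index set $I$, simple coroots $h_i$ and fundamental weights $\varpi_i$. $W$ is its Weyl group, with simple reflections $s_i$ and Bruhat order $<$. The chamber weights are $\Gamma=\{w\varpi_i:w\in W,i\in I\}$. Let $W_j^-=\{w\in W: s_jw<w\}$, set $\Gamma^j=\{w\varpi_i: w\in W_j^-, i\in I\}$, and set $\Gamma_j=\Gamma\setminus\Gamma^j$. *)

(* A finite-dimensional complex simple Lie algebra is represented
   by its Cartan matrix (Serre / Cartan–Killing classification). *)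
From mathcomp Require Import all_boot all_algebra.
From Stdlib Require Import Relations.
Set Implicit Arguments. Unset Strict Implicit. Unset Printing Implicit Defensive.
Import GRing.Theory Num.Theory.
Local Open Scope ring_scope.

(* Index set I = 'I_n ; Cartan matrix  C i j = <h_i, alpha_j>. *)
Definition finite_simple_cartan (n : nat) (C : 'I_n -> 'I_n -> int) : Prop :=
  (0 < n)%N /\
  (forall i, C i i = 2) /\
  (forall i j, i != j -> C i j <= 0) /\
  (forall i j, C i j = 0 <-> C j i = 0) /\
      (* symmetrizable with positive definite symmetrization (finite type) *)
      (exists d : 'I_n -> int,
          [/\ forall i, 0 < d i,
              forall i j, d i * C i j = d j * C j i &
              forall x : 'I_n -> rat, (exists i, x i != 0) ->
                0 < \sum_i \sum_j x i * ((d i * C i j)%:~R) * x j]) /\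
      (* indecomposable (simple rather than semisimple) *)
      (forall J : {set 'I_n},
          (forall a b, a \in J -> b \notin J -> C a b = 0) -> J = set0 \/ J = setT).

(* Integral weights, written in the basis of fundamental weights:
   lambda k = <h_k, lambda>. *)
Definition weight (n : nat) := {ffun 'I_n -> int}.

Definition fund (n : nat) (i : 'I_n) : weight n := [ffun k => if k == i then 1 else 0].

(* simple reflection s_i lambda = lambda - <h_i,lambda> alpha_i,
   where <h_k, alpha_i> = C k i *)
Definition sref (n : nat) (C : 'I_n -> 'I_n -> int) (i : 'I_n) (l : weight n) : weight n :=
  [ffun k => l k - l i * C k i].

(* A word [:: i1; ...; ik] represents s_{i1} ... s_{ik} in W. *)
Definition wact (n : nat) (C : 'I_n -> 'I_n -> int) (w : seq 'I_n) (l : weight n) : weight n :=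
  foldr (sref C) l w.

(* equality in the Weyl group (the action on the weight lattice is faithful) *)
Definition weq (n : nat) (C : 'I_n -> 'I_n -> int) (u v : seq 'I_n) : Prop :=
  forall l, wact C u l = wact C v l.

Definition wlen (n : nat) (C : 'I_n -> 'I_n -> int) (w : seq 'I_n) (k : nat) : Prop :=
  (exists u, size u = k /\ weq C u w) /\ (forall u, weq C u w -> (k <= size u)%N).

Definition is_refl (n : nat) (C : 'I_n -> 'I_n -> int) (t : seq 'I_n) : Prop :=
  exists (u : seq 'I_n) (i : 'I_n), weq C t (u ++ i :: rev u).

Definition bruhat_step (n : nat) (C : 'I_n -> 'I_n -> int) (x y : seq 'I_n) : Prop :=
  exists t, [/\ is_refl C t, weq C y (x ++ t) &
     exists kx ky, [/\ wlen C x kx, wlen C y ky & (kx < ky)%N]].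

Definition bruhat_lt (n : nat) (C : 'I_n -> 'I_n -> int) : relation (seq 'I_n) :=
  clos_trans _ (bruhat_step C).

Definition chamber (n : nat) (C : 'I_n -> 'I_n -> int) (g : weight n) : Prop :=
  exists (w : seq 'I_n) (i : 'I_n), g = wact C w (fund i).

Definition Gamma_up (n : nat) (C : 'I_n -> 'I_n -> int) (j : 'I_n) (g : weight n) : Prop :=
  exists (w : seq 'I_n) (i : 'I_n), bruhat_lt C (j :: w) w /\ g = wact C w (fund i).

Definition Gamma_low (n : nat) (C : 'I_n -> 'I_n -> int) (j : 'I_n) (g : weight n) : Prop :=
  chamber C g /\ ~ Gamma_up C j g.

(* Since [<h_j, w varpi_i>] is the [h_i]-coordinate of the coroot [w^-1 h_j], the
   sign of [g j] is governed by the classical fact that [w h_s] is a nonnegative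
   combination of simple coroots whenever [l(w s) > l(w)].  This is Tits' induction on
   the length, which reduces everything to rank two; positive definiteness forces
   every pair of simple roots to be of type A1xA1, A2, B2 or G2, where it is a finite
   computation.  Then [l(s_j w) < l(w)] gives [s_j w < w] and [g j <= 0]; conversely,
   if [l(s_j w) > l(w)] and [g j <= 0] then [g j = 0], so [g = (s_j w) varpi_i] with
   [s_j (s_j w) < s_j w]. *)

From mathcomp Require Import all_boot all_order all_algebra zify ring.
From Stdlib Require Import Relations.
Import Order.TTheory GRing.Theory Num.Theory.
Local Open Scope ring_scope.
Set Implicit Arguments. Unset Strict Implicit. Unset Printing Implicit Defensive.

Fixpoint alt_word (b : bool) (k : nat) : seq bool :=
  if k is k'.+1 then rcons (alt_word (~~ b) k') b else [::].

Lemma size_alt_word b k : size (alt_word b k) = k.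
Proof. by elim: k b => [|k IH] b //=; rewrite size_rcons IH. Qed.

Lemma alt_word_add b k m : alt_word b (k + m) = alt_word (iter m negb b) k ++ alt_word b m.
Proof.
elim: m b => [|m IH] b; first by rewrite addn0 cats0.
by rewrite addnS [alt_word b _.+1]/= IH rcons_cat iterSr.
Qed.

Lemma alt_word_of_no_repeat (w : seq bool) b : (forall p c q, w <> p ++ c :: c :: q) ->
  (forall w', w <> rcons w' (~~ b)) -> w = alt_word b (size w).
Proof.
elim/last_ind: w b => [|w c IH] b nodup noend //.
have ecb : c = b.
  case: (c =P b) => // hcb; case: (noend w); congr rcons.
  by case: c b hcb {nodup noend IH} => -[].
move: nodup noend; rewrite ecb => nodup noend.
rewrite size_rcons /=; congr rcons; apply: IH.
  by move=> p c0 q hw; apply: (nodup p c0 (rcons q b)); rewrite hw rcons_cat.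
move=> w' hw; rewrite negbK in hw; apply: (nodup w' b [::]).
by rewrite hw -!cats1 -catA.
Qed.

(* Rank two: a word over the letters [s] (true) and [t] (false) sends a weight
   [l] to [l + a alpha_s + b alpha_t], where [(a, b)] is [dih_shift] evaluated at
   [c1 = <h_t, alpha_s>], [c2 = <h_s, alpha_t>], [x = <h_s, l>], [y = <h_t, l>];
   [dih_coact] is its action on the coroot coordinates [(a, b) = a h_s + b h_t]. *)
Definition dih_shift (c1 c2 : int) (w : seq bool) (x y : int) : int * int :=
  foldr (fun b ab => if b then (- ab.1 - x - c2 * ab.2, ab.2)
                     else (ab.1, - ab.2 - y - c1 * ab.1)) (0, 0) w.

Definition dih_coact (c1 c2 : int) (w : seq bool) (ab : int * int) : int * int :=
  foldr (fun b ab => if b then (- ab.1 - c1 * ab.2, ab.2)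
                     else (ab.1, - ab.2 - c2 * ab.1)) ab w.

Definition finite_cartan2 (c1 c2 : int) : Prop :=
  (c1 = 0 /\ c2 = 0) \/ (c1 = -1 /\ c2 = -1) \/ (c1 = -1 /\ c2 = -2) \/
  (c1 = -2 /\ c2 = -1) \/ (c1 = -1 /\ c2 = -3) \/ (c1 = -3 /\ c2 = -1).

(* [m] is the order of [s t]: 2, 3, 4, 6 for the types A1xA1, A2, B2, G2. *)
Lemma finite_cartan2_coxeter c1 c2 : finite_cartan2 c1 c2 ->
  exists2 m, (0 < m)%N &
   (forall x y, dih_shift c1 c2 (alt_word false m) x y =
                dih_shift c1 c2 (alt_word true m) x y) /\
   (forall k, (k < m)%N -> 0 <= (dih_coact c1 c2 (alt_word false k) (1, 0)).1 /\
                           0 <= (dih_coact c1 c2 (alt_word false k) (1, 0)).2).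
Proof.
case=> [[-> ->]|[[-> ->]|[[-> ->]|[[-> ->]|[[-> ->]|[-> ->]]]]]];
  [exists 2%N | exists 3%N | exists 4%N | exists 4%N | exists 6%N | exists 6%N] => //;
  (split; [by move=> x y /=; congr pair; ring
          | by case=> [|[|[|[|[|[|k]]]]]] //= _; split; lia]).
Qed.

Lemma det_col_perturbed_id (R : comPzRingType) m (A : 'M[R]_m) i :
  (forall a b, b != i -> A a b = (a == b)%:R) -> \det A = A i i.
Proof.
move=> idA; rewrite (expand_det_row A i) (bigD1 i) //= big1 ?addr0; last first.
  by move=> b nib; rewrite idA // eq_sym (negbTE nib) mul0r.
rewrite /cofactor -signr_odd addnn odd_double expr0 mul1r.
have -> : row' i (col' i A) = 1%:M.
  apply/matrixP => a b; rewrite !mxE idA; last by rewrite eq_sym neq_lift.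
  by rewrite (inj_eq (@lift_inj _ i)).
by rewrite det1 mulr1.
Qed.

Section WeylGroup.
Variables (n : nat) (C : 'I_n -> 'I_n -> int).
Hypothesis C_diag : forall i, C i i = 2.

Lemma srefK i : involutive (sref C i).
Proof. by move=> l; apply/ffunP => k; rewrite !ffunE C_diag; ring. Qed.

Lemma wact_cat u v l : wact C (u ++ v) l = wact C u (wact C v l).
Proof. by rewrite /wact foldr_cat. Qed.

Lemma wact_revK w l : wact C (rev w) (wact C w l) = l.
Proof.
elim: w l => [|i w IH] l //=.
by rewrite rev_cons -cats1 wact_cat /= srefK IH.
Qed.

Lemma wact_revKV w l : wact C w (wact C (rev w) l) = l.
Proof. by rewrite -{1}(revK w) wact_revK. Qed.

Lemma weq_refl u : weq C u u. Proof. by []. Qed.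
Lemma weq_sym u v : weq C u v -> weq C v u. Proof. by move=> h l; rewrite h. Qed.
Lemma weq_trans u v w : weq C u v -> weq C v w -> weq C u w.
Proof. by move=> h1 h2 l; rewrite h1 h2. Qed.
Lemma weq_cat u u' v v' : weq C u u' -> weq C v v' -> weq C (u ++ v) (u' ++ v').
Proof. by move=> h1 h2 l; rewrite !wact_cat h1 h2. Qed.
Lemma weq_rcons i u u' : weq C u u' -> weq C (rcons u i) (rcons u' i).
Proof. by move=> h; rewrite -!cats1; apply: weq_cat. Qed.
Lemma weq_consK i u : weq C (i :: i :: u) u.
Proof. by move=> l /=; rewrite srefK. Qed.
Lemma weq_rconsK i u : weq C (rcons (rcons u i) i) u.
Proof. by move=> l; rewrite -!cats1 -catA !wact_cat /= srefK. Qed.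
Lemma weq_rev u v : weq C u v -> weq C (rev u) (rev v).
Proof. by move=> h l; rewrite -{1}(wact_revKV v l) -h wact_revK. Qed.

Definition refl_mx (i : 'I_n) : 'M[int]_n :=
  \matrix_(a, b) ((a == b)%:R - (b == i)%:R * C a i).
Definition word_mx (w : seq 'I_n) : 'M[int]_n := foldr (fun i M => refl_mx i *m M) 1%:M w.
Definition coords (l : weight n) : 'cV[int]_n := \col_k l k.

Lemma sum_delta (f : 'I_n -> int) a : \sum_b (b == a)%:R * f b = f a.
Proof.
by rewrite (bigD1 a) //= eqxx mul1r big1 ?addr0 // => b /negbTE ->; rewrite mul0r.
Qed.

Lemma refl_mx_coords i l : refl_mx i *m coords l = coords (sref C i l).
Proof.
apply/matrixP => a z; rewrite !mxE ffunE.
under eq_bigr do rewrite !mxE mulrBl.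
rewrite big_split /= sumrN.
under eq_bigr do rewrite eq_sym.
rewrite sum_delta.
under eq_bigr do rewrite -mulrA.
by rewrite sum_delta mulrC.
Qed.

Lemma word_mx_coords w l : word_mx w *m coords l = coords (wact C w l).
Proof.
elim: w => [|i w IH] /=; first by rewrite mul1mx.
by rewrite -mulmxA IH refl_mx_coords.
Qed.

Lemma word_mxE w a b : word_mx w a b = wact C w (fund b) a.
Proof.
have := congr1 (fun M : 'cV[int]_n => M a ord0) (word_mx_coords w (fund b)).
rewrite !mxE /= => <-.
under eq_bigr do rewrite mxE ffunE.
by rewrite (bigD1 b) //= eqxx mulr1 big1 ?addr0 // => c /negbTE ->; rewrite mulr0.
Qed.

Lemma weqP u v : reflect (weq C u v) (word_mx u == word_mx v).
Proof.
apply: (iffP eqP) => [e l | h]; last first.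
  by apply/matrixP => a b; rewrite !word_mxE h.
apply/ffunP => k.
have := congr1 (fun M => (M *m coords l) k ord0) e.
by rewrite /= !word_mx_coords !mxE.
Qed.

Lemma det_word_mx w : \det (word_mx w) = (-1) ^+ size w.
Proof.
elim: w => [|i w IH] /=; first by rewrite det1.
rewrite det_mulmx IH exprS (@det_col_perturbed_id _ _ _ i) ?mxE ?eqxx ?C_diag //.
by move=> a b /negbTE nbi; rewrite !mxE nbi mul0r subr0.
Qed.

Lemma weq_odd_size u v : weq C u v -> odd (size u) = odd (size v).
Proof.
move/weqP/eqP/(congr1 determinant); rewrite !det_word_mx.
by rewrite -signr_odd -[in RHS]signr_odd => /signr_inj.
Qed.

Definition has_word_of_size (w : seq 'I_n) (k : nat) : bool :=
  [exists u : k.-tuple 'I_n, word_mx u == word_mx w].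

Lemma has_word_of_size_size (w : seq 'I_n) : exists k, has_word_of_size w k.
Proof. by exists (size w); apply/existsP; exists (in_tuple w). Qed.

Definition wlength (w : seq 'I_n) : nat := ex_minn (has_word_of_size_size w).

Lemma wlength_word w : exists2 u, size u = wlength w & weq C u w.
Proof.
rewrite /wlength; case: ex_minnP => k /existsP [u /weqP hu] _.
by exists u; rewrite ?size_tuple.
Qed.

Lemma wlength_min u w : weq C u w -> (wlength w <= size u)%N.
Proof.
move=> /weqP h; rewrite /wlength; case: ex_minnP => k _; apply.
by apply/existsP; exists (in_tuple u).
Qed.

Lemma wlength_size w : (wlength w <= size w)%N.
Proof. exact: wlength_min. Qed.

Lemma wlength_weq u v : weq C u v -> wlength u = wlength v.
Proof.
move=> h; have [a sa ha] := wlength_word u; have [b sb hb] := wlength_word v.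
apply/anti_leq/andP; split.
  by rewrite -sb; apply: wlength_min; apply: weq_trans hb (weq_sym h).
by rewrite -sa; apply: wlength_min; apply: weq_trans ha h.
Qed.

Lemma wlenE w k : wlen C w k <-> k = wlength w.
Proof.
split=> [[[u [su hu]] hmin] | ->].
  have [a sa ha] := wlength_word w.
  by apply/anti_leq; rewrite -{1}sa hmin // -su wlength_min.
split=> [|u]; last exact: wlength_min.
by have [u ? ?] := wlength_word w; exists u.
Qed.

Lemma wlength_cat u v : (wlength (u ++ v) <= wlength u + wlength v)%N.
Proof.
have [a sa ha] := wlength_word u; have [b sb hb] := wlength_word v.
by rewrite -sa -sb -size_cat; apply: wlength_min; exact: weq_cat.
Qed.

Lemma wlength_rev u : wlength (rev u) = wlength u.
Proof.
suff le w : (wlength (rev w) <= wlength w)%N.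
  by apply/anti_leq; rewrite le -{1}(revK u) le.
have [a sa ha] := wlength_word w.
by rewrite -sa -size_rev; apply: wlength_min; apply: weq_rev.
Qed.

Lemma wlength_rcons_le i u : (wlength (rcons u i) <= (wlength u).+1)%N.
Proof.
by rewrite -cats1 -addn1; apply: leq_trans (wlength_cat _ _) _; rewrite leq_add2l wlength_size.
Qed.

(* The sign character [det (word_mx w)] forbids [wlength (rcons w i) = wlength w]. *)
Lemma wlength_rcons w i :
  wlength (rcons w i) = (wlength w).+1 \/ (wlength (rcons w i)).+1 = wlength w.
Proof.
have [a sa ha] := wlength_word w; have [b sb hb] := wlength_word (rcons w i).
have hab : weq C b (rcons a i) := weq_trans hb (weq_rcons i (weq_sym ha)).
have neq : wlength (rcons w i) != wlength w.
  by apply/eqP=> e; move: (weq_odd_size hab); rewrite size_rcons sb sa e /=; case: odd.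
have := wlength_rcons_le i w.
have := wlength_rcons_le i (rcons w i); rewrite (wlength_weq (weq_rconsK i w)).
lia.
Qed.

Lemma wlength_cons w i :
  wlength (i :: w) = (wlength w).+1 \/ (wlength (i :: w)).+1 = wlength w.
Proof. by rewrite -(wlength_rev (i :: w)) -(wlength_rev w) rev_cons; exact: wlength_rcons. Qed.

Lemma wlength_rcons_gt w i :
  (wlength w < wlength (rcons w i))%N -> wlength (rcons w i) = (wlength w).+1.
Proof. by case: (wlength_rcons w i) => // <-; rewrite ltnNge leqnSn. Qed.

Lemma wlength_last_descent w : (0 < wlength w)%N ->
  exists u t, weq C (rcons u t) w /\ (wlength u).+1 = wlength w.
Proof.
have [[|u t] su u_w] := wlength_word w; first by rewrite -su.
exists (belast u t), (last u t); rewrite -lastI; split=> //.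
have := wlength_size (belast u t); have := wlength_rcons_le (last u t) (belast u t).
by rewrite -lastI (wlength_weq u_w) -su /= size_belast; lia.
Qed.

(* The coroot lattice is stored in coordinates along the simple coroots [h_k],
   so [fund i] also stands for [h_i] as an argument of [coact]. *)
Definition cref (i : 'I_n) (x : weight n) : weight n :=
  [ffun k => x k - (k == i)%:R * \sum_l C l i * x l].
Definition coact (w : seq 'I_n) (x : weight n) : weight n := foldr cref x w.
Definition pairing (x l : weight n) : int := \sum_k x k * l k.

Lemma pairing_cref i x l : pairing (cref i x) (sref C i l) = pairing x l.
Proof.
rewrite /pairing; set a := \sum_l C l i * x l.
have e k : cref i x k * sref C i l k =
  x k * l k - l i * (C k i * x k) - (k == i)%:R * (a * l k)
  + (k == i)%:R * (a * l i * C k i).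
  by rewrite !ffunE; ring.
under eq_bigr do rewrite e.
by rewrite big_split /= !sumrB !sum_delta -mulr_sumr -/a C_diag; ring.
Qed.

Lemma pairing_sref i x l : pairing x (sref C i l) = pairing (cref i x) l.
Proof. by rewrite -{2}(srefK i l) pairing_cref. Qed.

Lemma coact_cat u v x : coact (u ++ v) x = coact u (coact v x).
Proof. by rewrite /coact foldr_cat. Qed.

Lemma coact_rcons w i x : coact (rcons w i) x = coact w (cref i x).
Proof. by rewrite -cats1 coact_cat. Qed.

Lemma pairing_wact w x l : pairing x (wact C w l) = pairing (coact (rev w) x) l.
Proof.
elim: w x => [|i w IH] x //=.
by rewrite pairing_sref IH rev_cons coact_rcons.
Qed.

Lemma pairing_fundr x k : pairing x (fund k) = x k.
Proof.
rewrite /pairing (bigD1 k) //= ffunE eqxx mulr1 big1 ?addr0 // => b nbk.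
by rewrite ffunE (negbTE nbk) mulr0.
Qed.

Lemma pairing_fundl l k : pairing (fund k) l = l k.
Proof.
rewrite /pairing (bigD1 k) //= ffunE eqxx mul1r big1 ?addr0 // => b nbk.
by rewrite ffunE (negbTE nbk) mul0r.
Qed.

Lemma wact_fundE w k j : wact C w (fund k) j = coact (rev w) (fund j) k.
Proof. by rewrite -pairing_fundl pairing_wact pairing_fundr. Qed.

Lemma coact_weq u v x : weq C u v -> coact u x = coact v x.
Proof.
move=> /weq_rev h; apply/ffunP => k.
by rewrite -(revK u) -(revK v) -!pairing_fundr -!pairing_wact h.
Qed.

Lemma coact_lin w (a b : int) (x y : weight n) :
  coact w [ffun k => a * x k + b * y k] =
  [ffun k => a * coact w x k + b * coact w y k].
Proof.
elim: w => [|i w IH] /=; first by apply/ffunP => k; rewrite !ffunE.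
rewrite IH; apply/ffunP => k; rewrite !ffunE.
under eq_bigr do rewrite ffunE mulrDr mulrCA [X in _ + X]mulrCA.
by rewrite big_split /= -!mulr_sumr; ring.
Qed.

Lemma coactN w (x : weight n) : coact w [ffun k => - x k] = [ffun k => - coact w x k].
Proof.
have negE y : [ffun k => - y k] = [ffun k => -1 * y k + 0 * y k] :> weight n.
  by apply/ffunP => k; rewrite !ffunE; ring.
by rewrite negE coact_lin; apply/ffunP => k; rewrite !ffunE; ring.
Qed.

Lemma cref_fund i : cref i (fund i) = [ffun k => - fund i k].
Proof.
apply/ffunP => k; rewrite !ffunE.
under eq_bigr do rewrite ffunE.
rewrite (bigD1 i) //= eqxx mulr1 big1 ?addr0 ?C_diag; last first.
  by move=> b nbi; rewrite (negbTE nbi) mulr0.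
by case: (k == i) => /=; ring.
Qed.

Lemma fundE (i k : 'I_n) : fund i k = (k == i)%:R.
Proof. by rewrite ffunE; case: (k == i). Qed.

Section Dihedral.
Variables (s t : 'I_n).
Hypothesis nst : s != t.

Definition letter (b : bool) : 'I_n := if b then s else t.

Lemma wact_dih w l : wact C (map letter w) l =
  [ffun k => l k + (dih_shift (C t s) (C s t) w (l s) (l t)).1 * C k s
                 + (dih_shift (C t s) (C s t) w (l s) (l t)).2 * C k t].
Proof.
elim: w => [|b w IH]; first by apply/ffunP => k; rewrite ffunE /=; ring.
rewrite map_cons /= IH; apply/ffunP => k.
by case: b; rewrite /= !ffunE ?C_diag; ring.
Qed.

Lemma sum_mul_fund2 (f : 'I_n -> int) a b :
  \sum_l f l * (a * fund s l + b * fund t l) = a * f s + b * f t.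
Proof.
rewrite (eq_bigr (fun l => a * ((l == s)%:R * f l) + b * ((l == t)%:R * f l))).
  by rewrite big_split /= -!mulr_sumr !sum_delta.
by move=> l _; rewrite !fundE; ring.
Qed.

Lemma coact_dih w a b : coact (map letter w) [ffun k => a * fund s k + b * fund t k] =
  [ffun k => (dih_coact (C t s) (C s t) w (a, b)).1 * fund s k
           + (dih_coact (C t s) (C s t) w (a, b)).2 * fund t k].
Proof.
elim: w => [|c w IH]; first by apply/ffunP => k; rewrite !ffunE.
rewrite map_cons /= IH; apply/ffunP => k.
case: c; rewrite /= !ffunE; under eq_bigr do rewrite ffunE;
  rewrite sum_mul_fund2 C_diag ?fundE; case: (eqVneq k s) => [->|nks];
  rewrite ?eqxx ?(negbTE nst) ?(negbTE nks) //=;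
  try case: (k == t); rewrite /= ?mulr1n ?mulr0n; ring.
Qed.


Hypothesis st_finite : finite_cartan2 (C t s) (C s t).

Lemma dih_coact_fund xb :
  (forall yb, weq C (map letter yb) (map letter xb) -> (size xb <= size yb)%N) ->
  (forall yb, weq C (map letter yb) (rcons (map letter xb) s) -> (size xb < size yb)%N) ->
  exists a b, [/\ 0 <= a, 0 <= b &
    coact (map letter xb) (fund s) = [ffun k => a * fund s k + b * fund t k]].
Proof.
move=> xb_min xbs_min.
have xb_alt : xb = alt_word false (size xb).
  apply: alt_word_of_no_repeat => [p c q exb | xb' exb].
    have h : weq C (map letter (p ++ q)) (map letter xb).
      rewrite exb !map_cat /=; apply: weq_cat; first exact: weq_refl.
      exact: weq_sym (weq_consK _ _).
    by have := xb_min _ h; rewrite exb !size_cat /=; lia.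
  have h : weq C (map letter xb') (rcons (map letter xb) s).
    by rewrite exb map_rcons /=; exact: weq_sym (weq_rconsK _ _).
  by have := xbs_min _ h; rewrite exb size_rcons; lia.
have [m m_gt0 [braid_m pos_m]] := finite_cartan2_coxeter st_finite.
have braid : weq C (map letter (alt_word false m)) (map letter (alt_word true m)).
  by move=> l; rewrite !wact_dih braid_m.
have xb_short : (size xb < m)%N.
  rewrite ltnNge; apply/negP => m_le.
  pose z := alt_word (iter m negb false) (size xb - m) ++ alt_word false m.-1.
  have xbs_z : weq C (rcons (map letter xb) s) (map letter z).
    have e : alt_word true m = rcons (alt_word false m.-1) true.
      by rewrite -{1}(prednK m_gt0).
    rewrite {1}xb_alt -(subnK m_le) alt_word_add map_cat rcons_cat /z map_cat.
    apply: weq_cat; first exact: weq_refl.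
    by apply: weq_trans (weq_rcons s braid) _; rewrite e map_rcons; exact: weq_rconsK.
  by have := xbs_min _ (weq_sym xbs_z); rewrite /z size_cat !size_alt_word; lia.
have [pos1 pos2] := pos_m _ xb_short; rewrite -xb_alt in pos1 pos2.
exists (dih_coact (C t s) (C s t) xb (1, 0)).1, (dih_coact (C t s) (C s t) xb (1, 0)).2.
split=> //; rewrite -coact_dih; congr coact.
by apply/ffunP => k; rewrite !ffunE; ring.
Qed.

End Dihedral.

Lemma wlength_factor_min v x w y :
  weq C (v ++ x) w -> (wlength v + size x = wlength w)%N -> weq C y x ->
  (size x <= size y)%N.
Proof.
move=> vx_w hL y_x.
rewrite -(leq_add2l (wlength v)) hL.
rewrite -(wlength_weq (weq_trans (weq_cat (weq_refl v) y_x) vx_w)).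
by apply: leq_trans (wlength_cat v y) _; rewrite leq_add2l wlength_size.
Qed.

Lemma dihedral_factor_min s t w v xb :
  weq C (v ++ map (letter s t) xb) w -> (wlength v + size xb = wlength w)%N ->
  exists v' xb', [/\ weq C (v' ++ map (letter s t) xb') w,
    (wlength v' + size xb' = wlength w)%N, (wlength v' <= wlength v)%N &
    forall b, (wlength v' < wlength (rcons v' (letter s t b)))%N].
Proof.
have [k] := ubnP (wlength v); elim: k v xb => // k IH v xb Lv_lt vx_w hL.
have [grows | [b shrinks]] : (forall b, (wlength v < wlength (rcons v (letter s t b)))%N)
    \/ exists b, (wlength (rcons v (letter s t b))).+1 = wlength v.
  case: (wlength_rcons v (letter s t true)) (wlength_rcons v (letter s t false))
    => [hs|hs] [ht|ht]; [left=> -[]; rewrite ?hs ?ht ?ltnSn | right; exists false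
                        | right; exists true | right; exists true] => //.
  by exists v, xb.
have Lvb_lt : (wlength (rcons v (letter s t b)) < k)%N by rewrite -ltnS shrinks.
have vbx_w : weq C (rcons v (letter s t b) ++ map (letter s t) (b :: xb)) w.
  apply: weq_trans vx_w; rewrite cat_rcons; apply: weq_cat (weq_refl v) _.
  exact: weq_consK.
have hLb : (wlength (rcons v (letter s t b)) + size (b :: xb) = wlength w)%N.
  by rewrite /= -hL -shrinks addnS.
have [v' [xb' [v'x_w hL' Lv' grows]]] := IH _ _ Lvb_lt vbx_w hLb.
exists v', xb'; split=> //.
by apply: leq_trans Lv' _; rewrite -shrinks leqnSn.
Qed.

Lemma dihedral_factor_reduced s t w v xb :
  weq C (v ++ map (letter s t) xb) w -> (wlength v + size xb = wlength w)%N ->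
  (wlength w < wlength (rcons w s))%N ->
  (forall yb, weq C (map (letter s t) yb) (map (letter s t) xb) -> (size xb <= size yb)%N)
  /\ (forall yb, weq C (map (letter s t) yb) (rcons (map (letter s t) xb) s) ->
       (size xb < size yb)%N).
Proof.
move=> vx_w hL /wlength_rcons_gt ws_succ; split=> yb.
  rewrite -(size_map (letter s t) yb) -(size_map (letter s t) xb).
  by apply: wlength_factor_min vx_w _; rewrite size_map.
rewrite -(size_map (letter s t) yb) -(size_map (letter s t) xb) -(size_rcons _ s).
apply: (wlength_factor_min (v := v) (w := rcons w s)).
  by rewrite -rcons_cat; apply: weq_rcons.
by rewrite size_rcons size_map ws_succ -hL addnS.
Qed.

Section Positivity.
Hypothesis C_rank2 : forall s t, s != t -> finite_cartan2 (C t s) (C s t).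

(* Tits' argument: split [w] as [v x] with [x] in a dihedral parabolic subgroup and
   [v] of minimal length, so that [v] is shorter than [w] and not shortened by [s],
   [t]; induction applies to [v] and the rank-two computation to [x]. *)
Lemma coact_fund_ge0 w s :
  (wlength w < wlength (rcons w s))%N -> forall k, 0 <= coact w (fund s) k.
Proof.
have [N] := ubnP (wlength w); elim: N w s => // N IH w s Lw_lt ws_gt.
have [w0|w_gt0] := posnP (wlength w).
  have [u su u_w] := wlength_word w.
  have u_nil : u = [::] by apply: size0nil; rewrite su.
  by move=> k; rewrite -(coact_weq _ u_w) u_nil ffunE; case: (k == s).
have [u [t [ut_w Lu]]] := wlength_last_descent w_gt0.
have nst : s != t.
  apply: contraTneq ws_gt => ->.
  rewrite -(wlength_weq (weq_rcons t ut_w)) (wlength_weq (weq_rconsK _ _)).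
  by rewrite -Lu -leqNgt leqnSn.
have ut_w' : weq C (u ++ map (letter s t) [:: false]) w by rewrite /= cats1.
have [v [xb [vx_w hL Lv grows]]] := dihedral_factor_min ut_w' (etrans (addn1 _) Lu).
have [xb_min xbs_min] := dihedral_factor_reduced vx_w hL ws_gt.
have [a [b [a_ge0 b_ge0 xb_s]]] := dih_coact_fund nst (C_rank2 nst) xb_min xbs_min.
have Lv_lt : (wlength v < N)%N by apply: leq_ltn_trans Lv _; rewrite -ltnS Lu.
move=> k; rewrite -(coact_weq _ vx_w) coact_cat xb_s coact_lin ffunE.
by rewrite addr_ge0 ?mulr_ge0 ?(IH v s Lv_lt (grows true)) ?(IH v t Lv_lt (grows false)).
Qed.

Lemma wact_fund_ge0 w j k :
  (wlength w < wlength (j :: w))%N -> 0 <= wact C w (fund k) j.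
Proof.
by move=> w_lt; rewrite wact_fundE; apply: coact_fund_ge0; rewrite -rev_cons !wlength_rev.
Qed.

Lemma wact_fund_le0 w j k :
  (wlength (j :: w) < wlength w)%N -> wact C w (fund k) j <= 0.
Proof.
move=> jw_lt; rewrite wact_fundE -oppr_ge0.
have := @coact_fund_ge0 (rcons (rev w) j) j _ k.
rewrite coact_rcons cref_fund coactN ffunE; apply.
by rewrite (wlength_weq (weq_rconsK _ _)) -rev_cons !wlength_rev.
Qed.

Lemma bruhat_lt_wlength x y : bruhat_lt C x y -> (wlength x < wlength y)%N.
Proof.
elim=> [a b [t [_ _ [ka [kb [/wlenE -> /wlenE -> //]]]]] | a b c _ ab _ bc].
exact: ltn_trans ab bc.
Qed.

(* [s_j w] is [w t] for the reflection [t = w^-1 s_j w]. *)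
Lemma bruhat_lt_cons w j : (wlength (j :: w) < wlength w)%N -> bruhat_lt C (j :: w) w.
Proof.
move=> jw_lt; apply: t_step; exists (rev w ++ j :: w); split.
- by exists (rev w), j; rewrite revK.
- by move=> l; rewrite cat_cons /= !wact_cat /= wact_revKV srefK.
- by exists (wlength (j :: w)), (wlength w); split=> //; apply/wlenE.
Qed.

Lemma Gamma_upE j g : chamber C g -> Gamma_up C j g <-> g j <= 0.
Proof.
move=> [w [i g_wi]]; split=> [[w' [i' [/bruhat_lt_wlength w'_lt ->]]] | gj_le0].
  exact: wact_fund_le0.
case: (wlength_cons w j) => [jw_gt | jw_lt]; last first.
  by exists w, i; split=> //; apply: bruhat_lt_cons; rewrite -jw_lt.
have gj0 : g j = 0.
  by apply/eqP; rewrite eq_le gj_le0 g_wi wact_fund_ge0 // jw_gt.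
exists (j :: w), i; split.
  by apply: bruhat_lt_cons; rewrite (wlength_weq (weq_consK _ _)) jw_gt.
by apply/ffunP => k; rewrite /= ffunE -g_wi gj0 mul0r subr0.
Qed.

End Positivity.
End WeylGroup.

Lemma sum_supp2 (R : nmodType) m (f : 'I_m -> R) s t : s != t ->
  (forall k, k != s -> k != t -> f k = 0) -> \sum_k f k = f s + f t.
Proof.
move=> nst f_out; rewrite (bigD1 s) //= (bigD1 t) 1?eq_sym //=.
by rewrite big1 ?addr0 // => k /andP [ks kt]; exact: f_out.
Qed.

(* The symmetrized form evaluated at [-c h_s + 2 h_t] equals [2 d_t (4 - c c')]. *)
Lemma finite_simple_cartan_prod_lt4 n (C : 'I_n -> 'I_n -> int) s t :
  finite_simple_cartan C -> s != t -> C s t * C t s < 4.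
Proof.
case=> _ [C_diag [_ [_ [[d [d_gt0 _ d_pd]] _]]]] nst.
pose x k : rat := if k == s then - (C s t)%:~R else if k == t then 2 else 0.
have x_out k : k != s -> k != t -> x k = 0 by rewrite /x => /negbTE-> /negbTE->.
have nts : (t == s) = false by rewrite eq_sym (negbTE nst).
have x_t : x t != 0 by rewrite /x nts eqxx.
have := d_pd x (ex_intro _ t x_t).
rewrite (sum_supp2 nst); last by move=> k ks kt; rewrite big1 // => j _; rewrite x_out ?mul0r.
rewrite !(sum_supp2 nst); try by move=> k ks kt; rewrite (x_out k) ?mulr0.
rewrite /x nts !eqxx !C_diag.
set c := C s t; set c' := C t s.
have -> : - c%:~R * (d s * 2)%:~R * - c%:~R + - c%:~R * (d s * c)%:~R * 2 +
          (2 * (d t * c')%:~R * - c%:~R + 2 * (d t * 2)%:~R * 2) =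
          2 * (d t)%:~R * (4 - (c * c')%:~R) :> rat.
  by rewrite !intrM; ring.
by rewrite pmulr_rgt0 ?mulr_gt0 ?ltr0z ?d_gt0 // subr_gt0 -[4 : rat]/(4%:~R) ltr_int => ?.
Qed.

Lemma finite_cartan2_of_prod (c1 c2 : int) : c1 <= 0 -> c2 <= 0 ->
  (c1 = 0 <-> c2 = 0) -> c1 * c2 < 4 -> finite_cartan2 c1 c2.
Proof.
move=> c1_le0 c2_le0 zero prod_lt4; rewrite /finite_cartan2.
have [c1_0|c1_neq0] := eqVneq c1 0; first by left; split; last exact/zero.
have c2_neq0 : c2 <> 0 by move/zero/eqP; rewrite (negbTE c1_neq0).
have c1_ge : -3 <= c1 by nia.
have c2_ge : -3 <= c2 by nia.
nia.
Qed.

Lemma finite_simple_cartan_rank2 n (C : 'I_n -> 'I_n -> int) :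
  finite_simple_cartan C -> forall s t, s != t -> finite_cartan2 (C t s) (C s t).
Proof.
move=> HC s t nst; have [_ [_ [C_le0 [C_sym0 _]]]] := HC.
apply: finite_cartan2_of_prod.
- by apply: C_le0; rewrite eq_sym.
- exact: C_le0.
- exact: C_sym0.
- by rewrite mulrC finite_simple_cartan_prod_lt4.
Qed.

Theorem lemma3p8 (n : nat) (C : 'I_n -> 'I_n -> int)
  (HC : finite_simple_cartan C) (j : 'I_n) (g : weight n) :
  chamber C g ->
  (Gamma_up C j g <-> g j <= 0) /\ (Gamma_low C j g <-> 0 < g j).
Proof.
move=> g_chamber.
have C_diag : forall i, C i i = 2 by case: HC => _ [].
have up := Gamma_upE C_diag (finite_simple_cartan_rank2 HC) j g_chamber.
split=> //; rewrite /Gamma_low up ltNge.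
by split=> [[_ /negP] | /negP].
Qed.
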